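(* Let $(X,c)$ be a finite metric space and let $R, M \subseteq X$ be nonempty. Let $Q$ be a minimal subset of $R$ such that $c_{\mu Q} = c_{\mu R}$ for all $\mu \in M$. Then for every $x \in X$, $$c_{xQ} \le 2\,c_{xM} + c_{xR}.$$
   Context: For $x\in X$ and a nonempty $F\subseteq X$, $c_{xF} = \min_{f\in F} c_{xf}$ denotes the distance from $x$ to the nearest point of $F$. *)

From mathcomp Require Import all_boot all_order all_algebra.
Set Implicit Arguments. Unset Strict Implicit. Unset Printing Implicit Defensive.
Import Order.TTheory GRing.Theory Num.Theory.
Local Open Scope ring_scope.

Definition is_metric (K : realFieldType) (T : finType) (c : T -> T -> K) : Prop :=
  [/\ forall x y, 0 <= c x y,
      forall x y, c x y = 0 <-> x = y,
      forall x y, c x y = c y x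
    & forall x y z, c x z <= c x y + c y z].

(* c_{xF} = min_{f in F} c x f  (meaningful only for nonempty F; 0 otherwise). *)
Definition distS (K : realFieldType) (T : finType) (c : T -> T -> K)
    (x : T) (F : {set T}) : K :=
  match [pick f in F] with
  | Some f0 => \big[Num.min/c x f0]_(f in F) c x f
  | None => 0
  end.

Definition preserves (K : realFieldType) (T : finType) (c : T -> T -> K)
    (R M Q : {set T}) : Prop :=
  [/\ Q \subset R, Q != set0 & forall mu, mu \in M -> distS c mu Q = distS c mu R].

Definition minimal_preserving (K : realFieldType) (T : finType) (c : T -> T -> K)
    (R M Q : {set T}) : Prop :=
  preserves c R M Q /\ forall Q' : {set T}, Q' \proper Q -> ~ preserves c R M Q'.

(* The
   distance to a nonempty set is 1-Lipschitz, so for the point mu of M nearest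
   to x we get c_{xQ} <= c_{x mu} + c_{mu Q} = c_{x mu} + c_{mu R}
   <= 2 c_{x mu} + c_{xR}. *)
From mathcomp Require Import all_boot all_order all_algebra.
Set Implicit Arguments. Unset Strict Implicit. Unset Printing Implicit Defensive.
Import Order.TTheory GRing.Theory Num.Theory.
Local Open Scope ring_scope.

Section DistanceToSet.

Variables (K : realFieldType) (T : finType) (c : T -> T -> K).

Lemma distS_le_mem x (F : {set T}) f : f \in F -> distS c x F <= c x f.
Proof.
move=> fF; rewrite /distS; case: pickP => [f0 _|/(_ f)]; last by rewrite fF.
by rewrite (bigD1 f) //= ge_min lexx.
Qed.

Lemma distS_attained x (F : {set T}) :
  F != set0 -> exists2 f, f \in F & distS c x F = c x f.
Proof.
move=> /set0Pn [g gF]; rewrite /distS; case: pickP => [f0 f0F|/(_ g)]; last by rewrite gF.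
apply: (big_ind (fun v => exists2 f, f \in F & v = c x f)).
- by exists f0.
- move=> a b [fa faF ->] [fb fbF ->]; rewrite /Order.min.
  by case: ifP => _; [exists fa | exists fb].
- by move=> f fF; exists f.
Qed.

Hypothesis c_triangle : forall x y z, c x z <= c x y + c y z.

Lemma distS_lipschitz x y (F : {set T}) :
  F != set0 -> distS c x F <= c x y + distS c y F.
Proof.
move=> F0; have [f fF ->] := distS_attained y F0.
by apply: le_trans (c_triangle x y f); apply: distS_le_mem.
Qed.

End DistanceToSet.

Theorem lemma2p1 (K : realFieldType) (T : finType) (c : T -> T -> K)
  (R M Q : {set T}) :
  is_metric c -> R != set0 -> M != set0 ->
  minimal_preserving c R M Q ->
  forall x : T, distS c x Q <= 2 * distS c x M + distS c x R.
Proof.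
move=> [_ _ c_sym c_tri] R0 M0 [[_ Q0 preserves_M] _] x.
have [mu muM ->] := distS_attained c x M0.
have xQ_le : distS c x Q <= c x mu + distS c mu R.
  by rewrite -preserves_M //; apply: distS_lipschitz.
have muR_le : distS c mu R <= c x mu + distS c x R.
  by rewrite (c_sym x mu); apply: distS_lipschitz.
apply: le_trans xQ_le _.
by rewrite mulr2n mulrDl mul1r -addrA lerD2l.
Qed.
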